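(* Let $\mathcal G$ be a core network with input nodes $\iota_1,\dots,\iota_n$ and output node $o$. The absolutely super-simple nodes of $\mathcal G$ can be uniquely ordered as $\rho_1>\rho_2>\cdots>\rho_p>o$, where $a>b$ means that, for every $m$, $b$ is downstream from $a$ along every $\iota_mo$-simple path (i.e. $b$ appears after $a$ on every such path).
   Context: Node $b$ is downstream from $a$ if there is a directed path from $a$ to $b$. A core network: every node is upstream from $o$ and downstream from at least one input node. A simple path visits each node at most once; an $\iota_mo$-simple path is a simple path from $\iota_m$ to $o$. A node is absolutely super-simple if, for every $m=1,\dots,n$, it lies on every $\iota_mo$-simple path. *)

From mathcomp Require Import all_boot.
Set Implicit Arguments. Unset Strict Implicit. Unset Printing Implicit Defensive.

Section Network.
Variables (T : finType) (e : rel T).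

Definition downstream (a b : T) : Prop := connect e a b.

Definition core_network (n : nat) (iota : 'I_n -> T) (o : T) : Prop :=
  forall v : T, downstream v o /\ exists m : 'I_n, downstream (iota m) v.

Definition simple_path (a b : T) (p : seq T) : Prop :=
  path e a p /\ last a p = b /\ uniq (a :: p).

Definition abs_super_simple (n : nat) (iota : 'I_n -> T) (o v : T) : Prop :=
  forall (m : 'I_n) (p : seq T), simple_path (iota m) o p -> v \in iota m :: p.

Definition after_on (q : seq T) (a b : T) : Prop :=
  a \in q /\ b \in q /\ index a q < index b q.

Definition ss_gt (n : nat) (iota : 'I_n -> T) (o a b : T) : Prop :=
  forall (m : 'I_n) (p : seq T), simple_path (iota m) o p -> after_on (iota m :: p) a b.

End Network.

(* If an absolutely super-simple node b came after another one a on some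
   simple input-output path P but before it on another one Q, following P up
   to a and then Q from a would give a walk from the input of P to o avoiding
   b; shortening it to a simple path contradicts b being super-simple.  Hence
   all simple input-output paths visit the super-simple nodes in the same
   order, and the sequence rho is read off any one of them. *)
From mathcomp Require Import all_boot.
From mathcomp Require boolp.
Set Implicit Arguments. Unset Strict Implicit. Unset Printing Implicit Defensive.

Section Before.
Variable T : eqType.

Definition before (s : seq T) : rel T := fun x y => index x s < index y s.

Lemma pairwise_before_uniq s : uniq s -> pairwise (before s) s.
Proof.
case: s => [//|x0 s] us; apply/(pairwiseP x0) => i j hi hj ij.
by rewrite /before !index_uniq.
Qed.

Lemma pairwise_before_eq s s1 s2 :
  pairwise (before s) s1 -> pairwise (before s) s2 -> s1 =i s2 -> s1 = s2.
Proof.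
move=> /pairwise_sorted s1_sorted /pairwise_sorted s2_sorted.
apply: irr_sorted_eq s1_sorted s2_sorted.
- by move=> x y z; apply: ltn_trans.
- by move=> x; apply: ltnn.
Qed.

Lemma last_take_index x p (a : T) :
  a \in x :: p -> last x (take (index a (x :: p)) p) = a.
Proof.
elim: p x => [|y p IH] x; first by rewrite mem_seq1 => /eqP ->.
rewrite inE [index a _]/= eq_sym; case: eqP => [-> //|_ /= ap].
exact: IH.
Qed.

End Before.

Section SimplePaths.
Variables (T : finType) (e : rel T).

Lemma shorten_simple_path x y p :
  path e x p -> last x p = y ->
  exists2 q, simple_path e x y q & {subset x :: q <= x :: p}.
Proof.
move=> xp <-; case: (shortenP xp) => q xq uq qp.
exists q => // z; rewrite !inE => /orP[-> //|/qp ->]; exact: orbT.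
Qed.

Lemma connect_simple_path x y : connect e x y -> exists p, simple_path e x y p.
Proof.
by case/connectP=> p xp ->; have [q sq _] := shorten_simple_path xp erefl; exists q.
Qed.

Lemma path_drop_index x p a :
  path e x p -> a \in x :: p -> path e a (drop (index a (x :: p)) p).
Proof.
move=> + ap; rewrite -{1}(cat_take_drop (index a (x :: p)) p) cat_path.
by rewrite last_take_index // => /andP[].
Qed.

Lemma simple_path_reroute x1 p1 x2 p2 y a b :
  path e x1 p1 -> simple_path e x2 y p2 ->
  a \in x1 :: p1 -> a \in x2 :: p2 ->
  index a (x1 :: p1) < index b (x1 :: p1) ->
  index b (x2 :: p2) < index a (x2 :: p2) ->
  exists2 q, simple_path e x1 y q & b \notin x1 :: q.
Proof.
move=> x1p1 [x2p2 [p2y up2]] ap1 ap2 ab1 ba2.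
set k1 := index a (x1 :: p1) in ab1; set k2 := index a (x2 :: p2) in ba2.
set w := take k1 p1 ++ drop k2 p2.
have pre_a : last x1 (take k1 p1) = a by apply: last_take_index.
have x1w : path e x1 w.
  by rewrite cat_path take_path // pre_a path_drop_index.
have wy : last x1 w = y.
  by rewrite last_cat pre_a -(last_take_index ap2) -last_cat cat_take_drop.
have b_pre : b \notin take k1.+1 (x1 :: p1).
  by rewrite in_take_leq ?index_mem // ltnS -ltnNge.
have b_suf : b \notin drop k2.+1 (x2 :: p2).
  move: up2; rewrite -[in uniq _](cat_take_drop k2.+1 (x2 :: p2)) cat_uniq => /and3P[_ + _].
  apply: contra => b_drop; apply/hasP; exists b => //.
  by rewrite in_take_leq ?index_mem // ltnS ltnW.
have [q sq qw] := shorten_simple_path x1w wy.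
exists q => //; apply/negP => /qw; apply/negP.
by rewrite -cat_cons mem_cat negb_or b_pre.
Qed.

End SimplePaths.

Section SuperSimpleOrder.
Variables (T : finType) (e : rel T) (n : nat) (iota : 'I_n -> T) (o : T).

Lemma abs_super_simple_ss_gt m p a b :
  abs_super_simple e iota o a -> abs_super_simple e iota o b ->
  simple_path e (iota m) o p ->
  before (iota m :: p) a b -> ss_gt e iota o a b.
Proof.
move=> Aa Ab sp ab m' p' sp'.
have aP' := Aa m' p' sp'; have bP' := Ab m' p' sp'.
split=> //; split=> //.
case: ltngtP => // [ba | ab'].
  have [q sq bq] := simple_path_reroute sp.1 sp' (Aa m p sp) aP' ab ba.
  by rewrite (Ab m q sq) in bq.
have a_eq_b : a = b by rewrite -(nth_index o aP') ab' nth_index.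
by move: ab; rewrite /before a_eq_b ltnn.
Qed.

End SuperSimpleOrder.

Theorem lemma3p17 (T : finType) (e : rel T) (n : nat) (iota : 'I_n -> T) (o : T) :
  core_network e iota o ->
  exists! rho : seq T,
    (forall v : T, v \in rcons rho o <-> abs_super_simple e iota o v) /\
    (forall i j : nat, i < j -> j < size (rcons rho o) ->
       ss_gt e iota o (nth o (rcons rho o) i) (nth o (rcons rho o) j)).
Proof.
move=> core; set super_simple := abs_super_simple e iota o.
have [m0 _] := (core o).2.
have [p0 sp0] := connect_simple_path (core (iota m0)).1.
set P := iota m0 :: p0.
have super_simple_P v : super_simple v -> v \in P by apply.
have super_simple_o : super_simple o by move=> m p [_ [<- _]]; apply: mem_last.
set f := filter (fun v => boolp.asbool (super_simple v)) P.
have f_mem v : v \in f <-> super_simple v.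
  rewrite mem_filter; split=> [/andP[/boolp.asboolP] //|Sv].
  by rewrite super_simple_P // andbT; apply/boolp.asboolP.
have f_before : pairwise (before P) f.
  by apply/pairwise_filter/pairwise_before_uniq; case: sp0 => _ [].
set rho := filter (fun v => boolp.asbool (super_simple v)) (belast (iota m0) p0).
have f_rcons : f = rcons rho o.
  by rewrite /f /P lastI filter_rcons sp0.2.1 (boolp.asboolT super_simple_o).
exists rho; split.
  rewrite -f_rcons; split=> // i j ij jf.
  have f_nth k : k < size f -> super_simple (nth o f k) by move=> kf; apply/f_mem/mem_nth.
  apply: (abs_super_simple_ss_gt _ _ sp0); [exact: f_nth (ltn_trans ij jf)|exact: f_nth|].
  by move/(pairwiseP o): f_before; apply=> //; apply: ltn_trans jf.
move=> rho' [rho'_mem rho'_gt].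
suff : f = rcons rho' o by rewrite f_rcons => /rcons_inj[].
apply: pairwise_before_eq f_before _ _.
  by apply/(pairwiseP o) => i j _ jr ij; have [_ []] := rho'_gt i j ij jr m0 p0 sp0.
by move=> v; apply/idP/idP => [/f_mem/rho'_mem|/rho'_mem/f_mem].
Qed.
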